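(* Let $x\in\mathbb R$, $A,B\in\frac12\mathbb Z$ with $A\equiv B\bmod 1$. Then $$p(a,b,x)=\frac{\Gamma(A+a-x)\,\Gamma(B+b-x)}{\Gamma(A+a+x)\,\Gamma(B+b+x)}>0\quad\text{for all }a,b\in\mathbb Z_{\ge0}$$ if and only if either $A,B\in\mathbb Z_{\ge1}$ and $|x|<\min(A,B)$, or $A,B\in\frac12+\mathbb Z$ and $|x|<\max\bigl(\frac12,\min(A,B)\bigr)$. *)

From Stdlib Require Import Reals ZArith.
From Coquelicot Require Import Coquelicot.
Open Scope R_scope.

Definition Gamma_pos (t : R) : R :=
  RInt_gen (fun u => Rpower u (t - 1) * exp (- u)) (at_right 0) (Rbar_locally p_infty).

(* Extension to all real t by the functional equation
   Gamma t = Gamma (t + N) / (t (t+1) ... (t+N-1)), with N chosen so that t + N > 0.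
   At the poles t in Z_{<=0} the value is meaningless (a division by 0);
   we always guard its use with [Gamma_defined]. *)
Definition Gamma_shift (t : R) : nat := Z.to_nat (up (- t)).

Fixpoint rising (t : R) (n : nat) : R :=
  match n with O => 1 | S m => rising t m * (t + INR m) end.

Definition Gamma (t : R) : R :=
  Gamma_pos (t + INR (Gamma_shift t)) / rising t (Gamma_shift t).

Definition Gamma_defined (t : R) : Prop := forall n : nat, t <> - INR n.

Definition p_pos_at (A B x : R) (a b : nat) : Prop :=
  Gamma_defined (A + INR a - x) /\ Gamma_defined (B + INR b - x) /\
  Gamma_defined (A + INR a + x) /\ Gamma_defined (B + INR b + x) /\
  0 < (Gamma (A + INR a - x) * Gamma (B + INR b - x)) /
      (Gamma (A + INR a + x) * Gamma (B + INR b + x)).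

Definition is_half_int (A : R) : Prop := exists k : Z, 2 * A = IZR k.
Definition is_pos_int (A : R) : Prop := exists n : Z, (1 <= n)%Z /\ A = IZR n.
Definition in_half_plus_Z (A : R) : Prop := exists k : Z, A = / 2 + IZR k.

(* Write p(a, b, x) as the product of the ratios Gamma (A + a - x) / Gamma (A + a + x)
   and Gamma (B + b - x) / Gamma (B + b + x).  Taking the other shift so large that its
   ratio is positive, positivity for all a, b splits into positivity of
   Gamma (C + c - x) * Gamma (C + c + x) for all c >= 0, separately for C = A and C = B.
   Gamma is positive on (0, oo) and has sign (-1)^(n+1) on (-n-1, -n), so this product
   is positive when |x| < C (both arguments positive) and, for C in 1/2 + Z, when
   |x| < 1/2 (both arguments in the same unit cell).  Otherwise a shift c puts
   C + c - |x| in (-1, 0], where Gamma has a pole or is negative, while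
   Gamma (C + c + |x|) > 0.  Positivity of Gamma on (0, oo) is that of the Euler
   integral, the supremum of the integrals of its integrand over [a, b] in (0, oo). *)

From Stdlib Require Import Reals ZArith Lra Lia Classical.
From Coquelicot Require Import Coquelicot.
Open Scope R_scope.

Lemma exp_le_compat x y : x <= y -> exp x <= exp y.
Proof. intros [Hlt | ->]; [left; apply exp_increasing |]; lra. Qed.

Lemma ln_le_div_add u k : 0 < u -> 0 < k -> ln u <= u / k + ln k - 1.
Proof.
  intros Hu Hk.
  assert (Hq : 0 < u / k) by (apply Rdiv_lt_0_compat; assumption).
  replace (ln u) with (ln (u / k) + ln k)
    by (unfold Rdiv; rewrite ln_mult, ln_Rinv by (auto with real); ring).
  assert (ln (u / k) <= u / k - 1).
  { rewrite <- (ln_exp (u / k - 1)). apply ln_le; [assumption |].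
    generalize (exp_ineq1_le (u / k - 1)); lra. }
  lra.
Qed.

Lemma RInt_le_primitive (f g G : R -> R) (a b : R) :
  a <= b -> ex_RInt f a b ->
  (forall u, a <= u <= b -> f u <= g u) ->
  (forall u, a <= u <= b -> is_derive G u (g u)) ->
  (forall u, a <= u <= b -> continuous g u) ->
  RInt f a b <= G b - G a.
Proof.
  intros Hab Hf Hfg HG Hg.
  assert (HI : is_RInt g a b (G b - G a)).
  { apply (is_RInt_derive G g); rewrite Rmin_left, Rmax_right by assumption;
      assumption. }
  rewrite <- (is_RInt_unique _ _ _ _ HI).
  apply RInt_le; [assumption | assumption | eexists; exact HI |].
  intros u Hu; apply Hfg; lra.
Qed.

Section Nonnegative_improper_integral.

Variable f : R -> R.
Hypothesis f_ge0 : forall u, 0 < u -> 0 <= f u.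
Hypothesis f_int : forall a b, 0 < a -> a <= b -> ex_RInt f a b.

Lemma RInt_nonneg_mono a b a' b' :
  0 < a' <= a -> a <= b <= b' -> RInt f a b <= RInt f a' b'.
Proof.
  intros Ha Hb.
  rewrite <- (RInt_Chasles (V := R_CompleteNormedModule) f a' a b')
    by (apply f_int; lra).
  rewrite <- (RInt_Chasles (V := R_CompleteNormedModule) f a b b')
    by (apply f_int; lra).
  assert (0 <= RInt f a' a).
  { apply RInt_ge_0; [lra | apply f_int; lra | intros; apply f_ge0; lra]. }
  assert (0 <= RInt f b b').
  { apply RInt_ge_0; [lra | apply f_int; lra | intros; apply f_ge0; lra]. }
  unfold plus; simpl; lra.
Qed.

Let compact_integrals (y : R) : Prop :=
  exists a b, 0 < a <= b /\ y = RInt f a b.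

(* Monotone convergence: the integral over [a, b] grows as [a] decreases and [b] grows. *)
Lemma is_RInt_gen_lub L : is_lub compact_integrals L ->
  is_RInt_gen f (at_right 0) (Rbar_locally p_infty) L.
Proof.
  intros [HL1 HL2] P [eps Heps]. unfold filtermapi.
  assert (Hnear : exists a0 b0, 0 < a0 <= b0 /\ L - eps < RInt f a0 b0).
  { apply NNPP. intros Hn.
    assert (L <= L - eps).
    { apply HL2. intros y [a [b [Hab ->]]].
      apply Rnot_lt_le. intros Hlt. apply Hn. exists a, b. split; assumption. }
    destruct eps as [eps Heps0]; simpl in *; lra. }
  destruct Hnear as [a0 [b0 [Hab0 Hlt]]].
  apply (Filter_prod _ _ _ (fun a => 0 < a <= a0) (fun b => b0 <= b)).
  - assert (Ha0 : 0 < a0) by lra.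
    exists (mkposreal a0 Ha0). intros y Hy Hy0; simpl.
    unfold ball in Hy; simpl in Hy; unfold AbsRing_ball, abs, minus, plus, opp in Hy;
      simpl in Hy.
    apply Rabs_def2 in Hy. lra.
  - exists b0. intros; lra.
  - intros a b Ha Hb. exists (RInt f a b). split.
    + apply (RInt_correct (V := R_CompleteNormedModule)), f_int; lra.
    + apply Heps.
      assert (RInt f a b <= L) by (apply HL1; exists a, b; split; [lra | reflexivity]).
      assert (RInt f a0 b0 <= RInt f a b) by (apply RInt_nonneg_mono; lra).
      unfold ball; simpl; unfold AbsRing_ball, abs, minus, plus, opp; simpl.
      apply Rabs_def1; lra.
Qed.

Hypothesis f_bounded : exists M, forall a b, 0 < a <= b -> RInt f a b <= M.

Lemma RInt_le_RInt_gen a b : 0 < a <= b ->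
  RInt f a b <= RInt_gen f (at_right 0) (Rbar_locally p_infty).
Proof.
  intros Hab.
  assert (Hbound : bound compact_integrals).
  { destruct f_bounded as [M HM]. exists M. intros y [a' [b' [Hab' ->]]]. auto. }
  assert (Hne : exists y, compact_integrals y) by (exists (RInt f a b), a, b; auto).
  destruct (completeness _ Hbound Hne) as [L HL].
  rewrite (is_RInt_gen_unique (V := R_CompleteNormedModule) f L)
    by (apply is_RInt_gen_lub; assumption).
  apply HL. exists a, b; auto.
Qed.

End Nonnegative_improper_integral.

Definition euler_integrand (s u : R) : R := Rpower u (s - 1) * exp (- u).

Lemma euler_integrand_pos s u : 0 < u -> 0 < euler_integrand s u.
Proof. intros. unfold euler_integrand, Rpower. apply Rmult_lt_0_compat; apply exp_pos. Qed.

Lemma euler_integrand_continuous s u : 0 < u -> continuous (euler_integrand s) u.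
Proof.
  intros Hu. apply (ex_derive_continuous (euler_integrand s)). unfold euler_integrand, Rpower.
  auto_derive. assumption.
Qed.

Lemma ex_RInt_euler_integrand s a b : 0 < a -> a <= b -> ex_RInt (euler_integrand s) a b.
Proof.
  intros Ha Hab. apply (ex_RInt_continuous (V := R_CompleteNormedModule)).
  rewrite Rmin_left by assumption. intros u Hu.
  apply euler_integrand_continuous; lra.
Qed.

(* On [(0, 1]] the integrand is at most [u ^ (s - 1)], with primitive [u ^ s / s]. *)
Lemma RInt_euler_integrand_head s a : 0 < s -> 0 < a <= 1 ->
  RInt (euler_integrand s) a 1 <= / s.
Proof.
  intros Hs Ha.
  assert (H : RInt (euler_integrand s) a 1 <=
              (fun u => Rpower u s / s) 1 - (fun u => Rpower u s / s) a).
  { apply (RInt_le_primitive _ (fun u => Rpower u (s - 1)) (fun u => Rpower u s / s));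
      [lra | apply ex_RInt_euler_integrand; lra | | |]; intros u Hu.
    - unfold euler_integrand. rewrite <- (Rmult_1_r (Rpower u (s - 1))) at 2.
      apply Rmult_le_compat_l; [unfold Rpower; left; apply exp_pos |].
      rewrite <- exp_0. apply exp_le_compat. lra.
    - unfold Rpower. auto_derive; [lra |].
      replace ((s - 1) * ln u) with (s * ln u + - ln u) by ring.
      rewrite exp_plus, exp_Ropp, exp_ln by lra. field. lra.
    - apply (ex_derive_continuous (fun u => Rpower u (s - 1))).
      unfold Rpower. auto_derive. lra. }
  simpl in H. unfold Rpower in H. rewrite ln_1, Rmult_0_r, exp_0 in H.
  assert (0 < exp (s * ln a) / s) by (apply Rdiv_lt_0_compat; [apply exp_pos | lra]).
  unfold Rdiv in *. lra.
Qed.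

(* On [[1, oo)], [u ^ (s - 1) <= k ^ c * exp (u / 2)] with [c = |s - 1|] and
   [k = 2 (c + 1)], because [c ln u <= c (u / k + ln k)] and [c / k <= 1 / 2]. *)
Definition euler_tail_const (s : R) : R :=
  Rpower (2 * (Rabs (s - 1) + 1)) (Rabs (s - 1)).

Lemma euler_integrand_tail_le s u : 1 <= u ->
  euler_integrand s u <= euler_tail_const s * exp (- u / 2).
Proof.
  intros Hu. unfold euler_integrand, euler_tail_const, Rpower. rewrite <- !exp_plus.
  apply exp_le_compat.
  set (c := Rabs (s - 1)). set (k := 2 * (c + 1)).
  assert (Hc : 0 <= c) by apply Rabs_pos.
  assert (Hk : 0 < k) by (unfold k; lra).
  assert (Hl : 0 <= ln u) by (rewrite <- ln_1; apply ln_le; lra).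
  assert (H1 : (s - 1) * ln u <= c * ln u) by (apply Rmult_le_compat_r; [| apply Rle_abs]; assumption).
  assert (H2 : c * ln u <= c * (u / k) + c * ln k).
  { generalize (ln_le_div_add u k ltac:(lra) Hk). nra. }
  assert (H3 : c * (u / k) <= u / 2).
  { unfold k. apply Rmult_le_reg_r with (2 * (c + 1)); [lra |].
    field_simplify; nra. }
  lra.
Qed.

Lemma RInt_euler_integrand_tail s b : 1 <= b ->
  RInt (euler_integrand s) 1 b <= 2 * euler_tail_const s.
Proof.
  intros Hb. set (C := euler_tail_const s).
  assert (HC : 0 < C) by (unfold C, euler_tail_const, Rpower; apply exp_pos).
  assert (H : RInt (euler_integrand s) 1 b <=
              (fun u => - 2 * C * exp (- u / 2)) b - (fun u => - 2 * C * exp (- u / 2)) 1).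
  { apply (RInt_le_primitive _ (fun u => C * exp (- u / 2)) (fun u => - 2 * C * exp (- u / 2)));
      [lra | apply ex_RInt_euler_integrand; lra | | |]; intros u Hu.
    - apply euler_integrand_tail_le. lra.
    - auto_derive; [auto | lra].
    - apply (ex_derive_continuous (fun u => C * exp (- u / 2))). auto_derive. auto. }
  simpl in H.
  assert (0 < exp (- b / 2)) by apply exp_pos.
  assert (exp (- (1) / 2) <= exp 0) by (apply exp_le_compat; lra).
  rewrite exp_0 in *. nra.
Qed.

Lemma Gamma_pos_gt0 s : 0 < s -> 0 < Gamma_pos s.
Proof.
  intros Hs.
  assert (Hge0 : forall u, 0 < u -> 0 <= euler_integrand s u)
    by (intros; left; apply euler_integrand_pos; assumption).
  assert (Hint : forall a b, 0 < a -> a <= b -> ex_RInt (euler_integrand s) a b)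
    by apply ex_RInt_euler_integrand.
  assert (Hbound : exists M, forall a b, 0 < a <= b -> RInt (euler_integrand s) a b <= M).
  { exists (/ s + 2 * euler_tail_const s). intros a b Hab.
    assert (Ha' : 0 < Rmin a 1 <= 1) by (split; [apply Rmin_pos; lra | apply Rmin_r]).
    assert (Hb' : 1 <= Rmax b 1) by apply Rmax_r.
    apply Rle_trans with (RInt (euler_integrand s) (Rmin a 1) (Rmax b 1)).
    { apply RInt_nonneg_mono; auto; split; [lra | apply Rmin_l | lra | apply Rmax_l]. }
    rewrite <- (RInt_Chasles (V := R_CompleteNormedModule) _ _ 1) by (apply Hint; lra).
    generalize (RInt_euler_integrand_head s _ Hs Ha') (RInt_euler_integrand_tail s _ Hb').
    unfold plus; simpl; lra. }
  apply Rlt_le_trans with (RInt (euler_integrand s) (/ 2) 1).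
  - apply RInt_gt_0; [lra | intros; apply euler_integrand_pos; lra |].
    intros; apply euler_integrand_continuous; lra.
  - apply (RInt_le_RInt_gen _ Hge0 Hint Hbound). lra.
Qed.

Lemma Gamma_gt0 t : 0 < t -> 0 < Gamma t.
Proof.
  intros Ht. unfold Gamma, Gamma_shift.
  destruct (archimed (- t)) as [_ Hup].
  assert (Hup1 : (up (- t) < 1)%Z) by (apply lt_IZR; lra).
  replace (Z.to_nat (up (- t))) with 0%nat by lia.
  simpl. rewrite Rplus_0_r, Rdiv_1_r. apply Gamma_pos_gt0; assumption.
Qed.

Lemma rising_sign t m : t + INR m < 1 -> 0 < (-1) ^ m * rising t m.
Proof.
  induction m as [|m IH]; intros H; simpl; [lra |].
  rewrite S_INR in H.
  replace (-1 * (-1) ^ m * (rising t m * (t + INR m)))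
    with ((-1) ^ m * rising t m * - (t + INR m)) by ring.
  apply Rmult_lt_0_compat; [apply IH |]; lra.
Qed.

Lemma Gamma_sign t n : - INR n - 1 < t < - INR n -> 0 < (-1) ^ S n * Gamma t.
Proof.
  intros Ht. unfold Gamma, Gamma_shift.
  replace (up (- t)) with (Z.of_nat (S n))
    by (apply tech_up; rewrite <- INR_IZR_INZ, S_INR; lra).
  rewrite Nat2Z.id.
  assert (Hg : 0 < Gamma_pos (t + INR (S n))) by (apply Gamma_pos_gt0; rewrite S_INR; lra).
  assert (Hr : 0 < (-1) ^ S n * rising t (S n)) by (apply rising_sign; rewrite S_INR; lra).
  assert (Hr0 : rising t (S n) <> 0) by (intros E; rewrite E in Hr; lra).
  replace ((-1) ^ S n * (Gamma_pos (t + INR (S n)) / rising t (S n)))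
    with (Gamma_pos (t + INR (S n)) * ((-1) ^ S n * rising t (S n)) / (rising t (S n))²)
    by (unfold Rsqr; field; assumption).
  apply Rdiv_lt_0_compat; [apply Rmult_lt_0_compat |]; auto using Rlt_0_sqr.
Qed.

Lemma Gamma_lt0 t : -1 < t < 0 -> Gamma t < 0.
Proof. intros Ht. generalize (Gamma_sign t 0 ltac:(simpl; lra)). simpl. lra. Qed.

Lemma Gamma_mul_gt0 m t t' :
  IZR m < t < IZR m + 1 -> IZR m < t' < IZR m + 1 -> 0 < Gamma t * Gamma t'.
Proof.
  intros Ht Ht'. destruct (Z_lt_le_dec m 0) as [Hm | Hm].
  - set (n := Z.to_nat (- m - 1)).
    assert (Hn : INR n = - IZR m - 1)
      by (unfold n; rewrite INR_IZR_INZ, Z2Nat.id, minus_IZR, opp_IZR by lia; reflexivity).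
    generalize (Gamma_sign t n ltac:(lra)) (Gamma_sign t' n ltac:(lra)).
    assert (Hsq : (-1) ^ S n * (-1) ^ S n = 1)
      by (rewrite <- Rpow_mult_distr; replace (-1 * -1) with 1 by ring; apply pow1).
    nra.
  - apply IZR_le in Hm. apply Rmult_lt_0_compat; apply Gamma_gt0; lra.
Qed.

Lemma Gamma_defined_gt0 t : 0 < t -> Gamma_defined t.
Proof. intros Ht n E. generalize (pos_INR n). lra. Qed.

Lemma Gamma_defined_between m t : IZR m < t < IZR m + 1 -> Gamma_defined t.
Proof.
  intros [H1 H2] n E. rewrite E, INR_IZR_INZ, <- opp_IZR in H1, H2.
  rewrite <- plus_IZR in H2. apply lt_IZR in H1. apply lt_IZR in H2. lia.
Qed.

Definition Gamma_pair_pos (t x : R) : Prop :=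
  Gamma_defined (t - x) /\ Gamma_defined (t + x) /\ 0 < Gamma (t - x) * Gamma (t + x).

Lemma Gamma_pair_pos_abs_lt t x : Rabs x < t -> Gamma_pair_pos t x.
Proof.
  intros H. apply Rabs_def2 in H.
  split; [| split]; [apply Gamma_defined_gt0; lra .. |].
  apply Rmult_lt_0_compat; apply Gamma_gt0; lra.
Qed.

Lemma Gamma_pair_pos_half m x : Rabs x < / 2 -> Gamma_pair_pos (/ 2 + IZR m) x.
Proof.
  intros H. apply Rabs_def2 in H.
  split; [| split]; [apply (Gamma_defined_between m); lra .. |].
  apply (Gamma_mul_gt0 m); lra.
Qed.

Lemma Gamma_pair_pos_Rabs t x : Gamma_pair_pos t x -> Gamma_pair_pos t (Rabs x).
Proof.
  unfold Rabs. destruct (Rcase_abs x); [| tauto].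
  intros [H1 [H2 H3]]. unfold Gamma_pair_pos.
  replace (t - - x) with (t + x) by ring. replace (t + - x) with (t - x) by ring.
  rewrite Rmult_comm. tauto.
Qed.

Lemma not_all_Gamma_pair_pos t y :
  0 <= y -> t <= y -> (/ 2 <= y \/ exists z, t = IZR z) ->
  ~ (forall a : nat, Gamma_pair_pos (t + INR a) y).
Proof.
  intros Hy Hty Hcase Hall.
  destruct (nfloor_ex (y - t) ltac:(lra)) as [n Hn].
  destruct (Hall n) as [Hdef [_ Hprod]].
  destruct (Req_dec (t + INR n - y) 0) as [E | E].
  { apply (Hdef 0%nat). rewrite E. simpl. ring. }
  assert (Hneg : Gamma (t + INR n - y) < 0) by (apply Gamma_lt0; lra).
  assert (Hpos : 0 < t + INR n + y).
  { destruct Hcase as [Hy2 | [z ->]]; [lra |].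
    assert (0 <= IZR z + INR n).
    { rewrite INR_IZR_INZ, <- plus_IZR. apply IZR_le.
      assert (-1 < z + Z.of_nat n)%Z
        by (apply lt_IZR; rewrite plus_IZR, <- INR_IZR_INZ; lra).
      lia. }
    lra. }
  generalize (Gamma_gt0 _ Hpos). nra.
Qed.

Lemma all_Gamma_pair_pos_int z x :
  (forall a : nat, Gamma_pair_pos (IZR z + INR a) x) <-> Rabs x < IZR z.
Proof.
  split.
  - intros Hall. apply Rnot_le_lt. intros Hle.
    apply (not_all_Gamma_pair_pos (IZR z) (Rabs x)); eauto using Rabs_pos.
    intros a. apply Gamma_pair_pos_Rabs, Hall.
  - intros Hx a. apply Gamma_pair_pos_abs_lt. generalize (pos_INR a). lra.
Qed.

Lemma all_Gamma_pair_pos_half z x :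
  (forall a : nat, Gamma_pair_pos (/ 2 + IZR z + INR a) x) <->
  Rabs x < Rmax (/ 2) (/ 2 + IZR z).
Proof.
  split.
  - intros Hall. apply Rnot_le_lt. intros Hle.
    apply (not_all_Gamma_pair_pos (/ 2 + IZR z) (Rabs x)).
    + apply Rabs_pos.
    + generalize (Rmax_r (/ 2) (/ 2 + IZR z)). lra.
    + left. generalize (Rmax_l (/ 2) (/ 2 + IZR z)). lra.
    + intros a. apply Gamma_pair_pos_Rabs, Hall.
  - intros Hx a. destruct (Rlt_or_le (Rabs x) (/ 2)) as [Hhalf | Hhalf].
    + rewrite INR_IZR_INZ, Rplus_assoc, <- plus_IZR. apply Gamma_pair_pos_half, Hhalf.
    + apply Gamma_pair_pos_abs_lt. generalize (pos_INR a).
      revert Hx. unfold Rmax. destruct (Rle_dec _ _); lra.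
Qed.

Lemma Rdiv_mul_gt0_iff g1 g2 g3 g4 :
  0 < g2 * g4 -> (0 < g1 * g2 / (g3 * g4) <-> 0 < g1 * g3).
Proof.
  intros H24.
  assert (Hg2 : g2 <> 0) by (intros ->; lra).
  assert (Hg4 : g4 <> 0) by (intros ->; lra).
  destruct (Req_dec g3 0) as [-> | Hg3].
  { rewrite !Rmult_0_l, !Rmult_0_r, Rdiv_0_r. lra. }
  replace (g1 * g2 / (g3 * g4)) with (g1 * g3 * (g2 * g4) / (g3 * g4)²)
    by (unfold Rsqr; field; auto).
  assert (Hsq : 0 < (g3 * g4)²) by (apply Rlt_0_sqr, Rmult_integral_contrapositive; auto).
  split; intros H.
  - assert (Hprod : 0 < g1 * g3 * (g2 * g4)).
    { replace (g1 * g3 * (g2 * g4)) with (g1 * g3 * (g2 * g4) / (g3 * g4)² * (g3 * g4)²)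
        by (field; apply Rmult_integral_contrapositive; auto).
      apply Rmult_lt_0_compat; assumption. }
    nra.
  - apply Rdiv_lt_0_compat; [apply Rmult_lt_0_compat |]; assumption.
Qed.

Lemma all_p_pos_at_iff A B x :
  (forall a b : nat, p_pos_at A B x a b) <->
  (forall a : nat, Gamma_pair_pos (A + INR a) x) /\
  (forall b : nat, Gamma_pair_pos (B + INR b) x).
Proof.
  split.
  - intros P. split.
    + intros a. destruct (INR_archimed 1 (Rabs x - B) Rlt_0_1) as [b Hb].
      destruct (Gamma_pair_pos_abs_lt (B + INR b) x ltac:(lra)) as [_ [_ HB]].
      destruct (P a b) as [HdA [_ [HdA' [_ Hp]]]].
      rewrite Rdiv_mul_gt0_iff in Hp by assumption.
      repeat split; assumption.
    + intros b. destruct (INR_archimed 1 (Rabs x - A) Rlt_0_1) as [a Ha].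
      destruct (Gamma_pair_pos_abs_lt (A + INR a) x ltac:(lra)) as [_ [_ HA]].
      destruct (P a b) as [_ [HdB [_ [HdB' Hp]]]].
      rewrite (Rmult_comm (Gamma (A + INR a - x))), (Rmult_comm (Gamma (A + INR a + x))),
        Rdiv_mul_gt0_iff in Hp by assumption.
      repeat split; assumption.
  - intros [HA HB] a b.
    destruct (HA a) as [HdA [HdA' Ha]]. destruct (HB b) as [HdB [HdB' Hb]].
    repeat split; try assumption.
    apply Rdiv_mul_gt0_iff; assumption.
Qed.

Lemma half_int_cases A : is_half_int A -> (exists z, A = IZR z) \/ in_half_plus_Z A.
Proof.
  intros [k Hk]. destruct (Zeven_odd_dec k) as [He | Ho].
  - left. destruct (Zeven_ex _ He) as [j ->]. exists j. rewrite mult_IZR in Hk. lra.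
  - right. destruct (Zodd_ex _ Ho) as [j ->]. exists j. rewrite plus_IZR, mult_IZR in Hk. lra.
Qed.

Lemma IZR_neq_half_plus_IZR z w : IZR z <> / 2 + IZR w.
Proof.
  intros E. assert (E2 : IZR (2 * (z - w)) = 1) by (rewrite mult_IZR, minus_IZR; lra).
  apply eq_IZR in E2. lia.
Qed.

Lemma is_pos_int_IZR z : 0 < IZR z -> is_pos_int (IZR z).
Proof. intros Hz. apply lt_0_IZR in Hz. exists z. split; [lia | reflexivity]. Qed.

Lemma lt_Rmin_iff y a b : y < Rmin a b <-> y < a /\ y < b.
Proof. unfold Rmin. destruct (Rle_dec a b); (split; [intros H; split | intros [H1 H2]]); lra. Qed.

Lemma lt_Rmax_Rmin_iff y c a b : y < Rmax c (Rmin a b) <-> y < Rmax c a /\ y < Rmax c b.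
Proof.
  unfold Rmax, Rmin. destruct (Rle_dec a b);
  repeat match goal with |- context [Rle_dec ?u ?v] => destruct (Rle_dec u v) end;
    (split; [intros H; split | intros [H1 H2]]); lra.
Qed.

Theorem lemma15p4 (x A B : R)
  (hA : is_half_int A) (hB : is_half_int B)
  (hAB : exists m : Z, A - B = IZR m) :
  (forall a b : nat, p_pos_at A B x a b) <->
  ((is_pos_int A /\ is_pos_int B /\ Rabs x < Rmin A B) \/
   (in_half_plus_Z A /\ in_half_plus_Z B /\ Rabs x < Rmax (/ 2) (Rmin A B))).
Proof.
  rewrite all_p_pos_at_iff. destruct hAB as [m HAB].
  destruct (half_int_cases A hA) as [[z HA] | [z HA]]; subst A.
  - replace B with (IZR (z - m)) by (rewrite minus_IZR; lra).
    rewrite !all_Gamma_pair_pos_int, lt_Rmin_iff.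
    split.
    + intros [HxA HxB]. generalize (Rabs_pos x). intros Hx0.
      left. split; [| split]; [apply is_pos_int_IZR; lra .. | split; assumption].
    + intros [[_ [_ Hx]] | [[w Hw] _]]; [assumption |].
      exfalso. exact (IZR_neq_half_plus_IZR z w Hw).
  - replace B with (/ 2 + IZR (z - m)) by (rewrite minus_IZR; lra).
    rewrite !all_Gamma_pair_pos_half, lt_Rmax_Rmin_iff.
    split.
    + intros Hx. right. split; [exists z | split; [exists (z - m)%Z |]]; auto.
    + intros [[[w [_ Hw]] _] | [_ [_ Hx]]]; [| assumption].
      exfalso. exact (IZR_neq_half_plus_IZR w z (eq_sym Hw)).
Qed.
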